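(* Let $d\ge1$, $D>0$, $\sigma\ge0$, $\alpha\in[0,1)$. Let $w^*\in\mathbb{R}^d$ with $\|w^*\|\le D$, and let $(x,\epsilon,b)$ be mutually independent random variables with $x\in\mathbb{R}^d$, $\|x\|\le1$ a.s., $\mathbb{E}[x]=0$, $\epsilon\in\mathbb{R}$, $|\epsilon|\le\sigma$ a.s., $\mathbb{E}\epsilon=0$, $b\in\mathbb{R}$, $\mathbb{P}(b\ne0)=\alpha$; set $y=\langle w^*,x\rangle+\epsilon+b$. Let $R=6D+\sigma$. Then for every $w\in\mathcal W$, $$F(w)-F(w^* )\le\frac1{1-\alpha}\big(L_R(w)-L_R(w^* )\big).$$
   Context: $\mathcal W=\{w\in\mathbb{R}^d:\|w\|\le D\}$. The Huber loss is $h_R(s)=\frac12s^2$ if $|s|\le R$ and $h_R(s)=R(|s|-\frac12R)$ otherwise. $L_R(w)=\mathbb{E}_{x,\epsilon,b}[h_R(\langle w,x\rangle-y)]$ is the expected Huber loss under the contaminated distribution, and $F(w)=\mathbb{E}_{x,\epsilon}\big[\tfrac12(\langle w,x\rangle-\langle w^*,x\rangle-\epsilon)^2\big]$ is the expected squared loss on uncorrupted data.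
   Formalization: The Huber loss $h_R(\langle w,x\rangle-y)$ is also assumed integrable for every w ∈ 𝒲, so $L_R$ is finite on 𝒲. The statement above fails without it. *)

From HB Require Import structures.
From mathcomp Require Import all_boot all_order all_algebra.
From mathcomp Require Import all_classical all_reals all_analysis.
Set Implicit Arguments. Unset Strict Implicit. Unset Printing Implicit Defensive.
Import Order.TTheory GRing.Theory Num.Theory.
Local Open Scope classical_set_scope.
Local Open Scope ring_scope.

Definition huber {R : realType} (r s : R) : R :=
  if `|s| <= r then s ^+ 2 / 2 else r * (`|s| - r / 2).

Definition vnorm {R : realType} {n : nat} (w : 'rV[R]_n) : R :=
  Num.sqrt (\sum_(i < n) w ord0 i ^+ 2).

Definition dotX {R : realType} {T : Type} {n : nat} (w : 'rV[R]_n)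
  (X : 'I_n -> T -> R) (t : T) : R :=
  \sum_(i < n) w ord0 i * X i t.

Definition sigma_vec {R : realType} {T : Type} {n : nat}
  (X : 'I_n -> T -> R) : set (set T) :=
  <<s [set A | exists i (B : set R), measurable B /\ A = X i @^-1` B] >>.

Definition sigma_rv {R : realType} {T : Type} (Y : T -> R) : set (set T) :=
  <<s [set A | exists B : set R, measurable B /\ A = Y @^-1` B] >>.

Definition indep3 {d} {T : measurableType d} {R : realType}
  (P : probability T R) (G1 G2 G3 : set (set T)) : Prop :=
  forall A B C, G1 A -> G2 B -> G3 C ->
    P (A `&` B `&` C) = (P A * P B * P C)%E.

Definition huber_risk {d} {T : measurableType d} {R : realType}
  (P : probability T R) {n : nat} (r : R) (wstar : 'rV[R]_n)
  (X : 'I_n -> T -> R) (eps b : T -> R) (w : 'rV[R]_n) : \bar R :=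
  (\int[P]_t (huber r (dotX w X t - (dotX wstar X t + eps t + b t)))%:E)%E.

Definition sq_risk {d} {T : measurableType d} {R : realType}
  (P : probability T R) {n : nat} (wstar : 'rV[R]_n)
  (X : 'I_n -> T -> R) (eps : T -> R) (w : 'rV[R]_n) : \bar R :=
  (\int[P]_t ((dotX w X t - dotX wstar X t - eps t) ^+ 2 / 2)%:E)%E.

From HB Require Import structures.
From mathcomp Require Import all_boot all_order all_algebra.
From mathcomp Require Import all_classical all_reals all_analysis.
From mathcomp Require Import measurable_realfun ring lra.
Import Order.TTheory GRing.Theory Num.Theory.
Import numFieldNormedType.Exports.
Local Open Scope classical_set_scope.
Local Open Scope ring_scope.

(* Put Z = <w - wstar, x> and a = -(eps + b), so that the Huber excess loss is
   h_R(Z + a) - h_R(a).  By convexity it is at least clip_R(a) Z, where clip_R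
   is the derivative of h_R; on the event b = 0 both |a| <= sigma and
   |Z + a| <= 2D + sigma <= R lie in the quadratic zone of h_R, where the
   excess is exactly clip_R(a) Z + Z^2/2.  Hence
     L_R(w) - L_R(wstar) >= E[clip_R(a) Z] + E[1_(b = 0) Z^2/2].
   As x is centred and independent of (eps, b), the first term vanishes and the
   second is (1 - alpha) E[Z^2/2]; likewise F(w) - F(wstar) = E[Z^2/2] - E[Z eps]
   = E[Z^2/2].
   Independence is given on events only.  It is lifted to the product rule for
   bounded random variables by approximating them uniformly with staircase
   functions, and from events of eps and of b separately to events of (eps, b) by
   the pi-lambda theorem.  The almost sure bounds on x and eps are made to hold
   everywhere by truncating outside the events where they hold. *)

Section Huber.
Context {R : realType}.
Implicit Types r s z a : R.

Definition clip r s : R := Num.max (- r) (Num.min r s).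

Variant clip_spec r s : R -> Prop :=
  | ClipLow of s < - r : clip_spec r s (- r)
  | ClipMid of - r <= s <= r : clip_spec r s s
  | ClipHigh of r < s : clip_spec r s r.

Lemma clipP r s : 0 <= r -> clip_spec r s (clip r s).
Proof.
move=> r0; rewrite /clip.
have [sr|rs] := ltP s (- r).
  by rewrite min_r ?max_l; [constructor | exact: ltW | lra].
have [sr'|rs'] := leP s r.
  by rewrite max_r //; constructor; apply/andP.
by rewrite max_r; [constructor | lra].
Qed.

Lemma clip_id r s : `|s| <= r -> clip r s = s.
Proof.
move=> sr; have r0 : 0 <= r := le_trans (normr_ge0 s) sr.
move: sr; rewrite ler_norml; case: clipP => //; lra.
Qed.

Lemma norm_clip_le r s : 0 <= r -> `|clip r s| <= r.
Proof. by move=> r0; rewrite ler_norml; case: clipP => // *; apply/andP; lra. Qed.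

Lemma huber_clip r s : 0 <= r -> huber r s = clip r s * s - clip r s ^+ 2 / 2.
Proof.
move=> r0; rewrite /huber; case: clipP => // hs.
- by rewrite ltr0_norm ?ifF ?expr2; [field | apply/negbTE; rewrite -ltNge | ]; lra.
- by rewrite ifT ?expr2 ?ler_norml //; field.
- by rewrite gtr0_norm ?ifF ?expr2; [field | apply/negbTE; rewrite -ltNge | ]; lra.
Qed.

Lemma huber_quad r s : `|s| <= r -> huber r s = s ^+ 2 / 2.
Proof. by move=> sr; rewrite /huber sr. Qed.

Lemma huber_incr_quad r z a : `|a| <= r -> `|z + a| <= r ->
  huber r (z + a) - huber r a = clip r a * z + z ^+ 2 / 2.
Proof. by move=> ar zar; rewrite !huber_quad // clip_id // !expr2; field. Qed.

Lemma huber_subgrad r z a : 0 <= r -> huber r a + clip r a * z <= huber r (z + a).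
Proof.
move=> r0; rewrite !huber_clip //.
by case: (clipP r a r0) => ha; case: (clipP r (z + a) r0) => hza; rewrite !expr2; nra.
Qed.

Lemma huber_incr_ge r z a (q : bool) : 0 <= r ->
  (q -> `|a| <= r /\ `|z + a| <= r) ->
  clip r a * z + q%:R * (z ^+ 2 / 2) <= huber r (z + a) - huber r a.
Proof.
move=> r0; case: q => [/(_ isT) [ar zar]|_]; first by rewrite huber_incr_quad // mul1r.
by rewrite mul0r addr0; have := huber_subgrad r z a r0; lra.
Qed.

Lemma huber_lipschitz r z a : 0 <= r -> `|huber r (z + a) - huber r a| <= r * `|z|.
Proof.
move=> r0; have lower := huber_subgrad r z a r0.
have upper := huber_subgrad r (- z) (z + a) r0.
rewrite addKr in upper.
have := ler_wpM2r (normr_ge0 z) (norm_clip_le r a r0).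
have := ler_wpM2r (normr_ge0 z) (norm_clip_le r (z + a) r0).
rewrite -!normrM !ler_norml => /andP[? ?] /andP[? ?].
by apply/andP; split; lra.
Qed.

Lemma measurable_clip r : measurable_fun setT (clip r).
Proof. exact/measurable_maxr/measurable_minr. Qed.

Lemma measurable_huber r : 0 <= r -> measurable_fun setT (huber r).
Proof.
move=> r0; rewrite (funext (fun s => huber_clip r s r0)).
apply: measurable_funB; first exact: measurable_funM (measurable_clip r) _.
by apply: measurable_funM => //; apply: measurable_funX; exact: measurable_clip.
Qed.

End Huber.

Section Dot.
Context {R : realType}.

Lemma cauchy_schwarz n (a b : 'I_n -> R) :
  (\sum_i a i * b i) ^+ 2 <= (\sum_i a i ^+ 2) * (\sum_i b i ^+ 2).
Proof.
have lagrange : \sum_i \sum_j (a i * b j - a j * b i) ^+ 2 =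
    2 * ((\sum_i a i ^+ 2) * (\sum_i b i ^+ 2)) - 2 * (\sum_i a i * b i) ^+ 2.
  have -> : \sum_i \sum_j (a i * b j - a j * b i) ^+ 2 =
      \sum_i \sum_j a i ^+ 2 * b j ^+ 2 + \sum_i \sum_j a j ^+ 2 * b i ^+ 2
      - 2 * \sum_i \sum_j a i * b i * (a j * b j).
    rewrite -big_split /= mulr_sumr -sumrB; apply: eq_bigr => i _.
    by rewrite -big_split /= mulr_sumr -sumrB; apply: eq_bigr => j _; ring.
  by rewrite -!big_distrlr /= exchange_big /= -big_distrlr /= expr2 mulrC; ring.
have : 0 <= \sum_i \sum_j (a i * b j - a j * b i) ^+ 2.
  by apply: sumr_ge0 => i _; apply: sumr_ge0 => j _; exact: sqr_ge0.
by rewrite lagrange; lra.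
Qed.

Lemma norm_dot_le_vnorm {n} (w : 'rV[R]_n) {x : 'I_n -> R} :
  \sum_i x i ^+ 2 <= 1 -> `|\sum_i w ord0 i * x i| <= vnorm w.
Proof.
move=> x_le1; rewrite /vnorm -sqrtr_sqr; apply: ler_wsqrtr.
apply: le_trans (cauchy_schwarz _ (w ord0) x) _; rewrite -[leRHS]mulr1.
by apply: ler_wpM2l => //; apply: sumr_ge0 => i _; exact: sqr_ge0.
Qed.

Lemma norm_le1_of_sum_sqr_le1 {n} {x : 'I_n -> R} {i} : \sum_j x j ^+ 2 <= 1 -> `|x i| <= 1.
Proof.
move=> x_le1; have : x i ^+ 2 <= 1.
  apply: le_trans x_le1; rewrite (bigD1 i) //= lerDl.
  by apply: sumr_ge0 => j _; exact: sqr_ge0.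
by rewrite expr2 ler_norml => ?; apply/andP; split; nra.
Qed.

End Dot.

Lemma stair_count {R : realType} (N : nat) (x : R) : 0 <= x ->
  let S := \sum_(k < N) ((k.+1%:R <= x)%R)%:R in
  [/\ S <= x, x <= N%:R -> x <= S + 1 & N%:R <= x -> S = N%:R].
Proof.
move=> x0; elim: N => [|N [IH1 IH2 IH3]] /=.
  by rewrite big_ord0; split => // h; lra.
rewrite big_ord_recr /=; set S := \sum_(_ < _) _ in IH1 IH2 IH3 *.
have [xN|Nx] := leP N.+1%:R x.
  have -> : S = N%:R by apply: IH3; apply: le_trans xN; rewrite ler_nat.
  by rewrite -natrD addn1; split => //; lra.
rewrite addr0; split => // _; have [xN|Nx'] := leP x N%:R; first exact: IH2.
by rewrite IH3 ?ltW //; move: Nx; rewrite -natr1; lra.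
Qed.

Lemma eq_of_norm_le_div {R : realType} (a b C : R) :
  (forall n : nat, `|a - b| <= C / n.+1%:R) -> a = b.
Proof.
move=> h; apply/eqP/negPn/negP => ab; have e0 : 0 < `|a - b| by rewrite normr_gt0 subr_eq0.
have := h (Num.trunc (C / `|a - b|)); have := truncnS_gt (C / `|a - b|).
rewrite ltr_pdivrMr // ler_pdivlMr ?ltr0n //; nra.
Qed.

Section BoundedExpectation.
Context {d} {T : measurableType d} {R : realType} (P : probability T R).
Implicit Types (f g : T -> R) (A : set T).

Definition bounded_measurable f :=
  measurable_fun setT f /\ exists M, forall t, `|f t| <= M.

Lemma bounded_measurable_pos {f} :
  bounded_measurable f -> exists2 M, 0 < M & forall t, `|f t| <= M.
Proof.
case=> _ [M fM]; exists (`|M| + 1) => [|t]; first by rewrite ltr_pwDr.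
by apply: le_trans (fM t) _; apply: le_trans (ler_norm M) _; rewrite lerDl.
Qed.

Lemma bounded_measurable_integrable {f} :
  bounded_measurable f -> P.-integrable setT (EFin \o f).
Proof.
move=> [mf [M fM]]; apply: measurable_bounded_integrable => //.
- by apply: le_lt_trans (probability_le1 P measurableT) _; exact: ltry.
- rewrite /bounded_near; near=> y => t _ /=.
  by apply: le_trans (fM t) _; near: y; exact: nbhs_pinfty_ge (num_real M).
Unshelve. all: end_near. Qed.

Lemma bounded_measurable_cst (c : R) : bounded_measurable (fun=> c).
Proof. by split; [exact: measurable_cst | exists `|c|]. Qed.

Lemma bounded_measurableD {f g} : bounded_measurable f -> bounded_measurable g ->
  bounded_measurable (fun t => f t + g t).
Proof.
move=> [mf [M fM]] [mg [K gK]]; split; first exact: measurable_funD.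
by exists (M + K) => t; apply: le_trans (ler_normD _ _) _; exact: lerD.
Qed.

Lemma bounded_measurableB {f g} : bounded_measurable f -> bounded_measurable g ->
  bounded_measurable (fun t => f t - g t).
Proof.
move=> [mf [M fM]] [mg [K gK]]; split; first exact: measurable_funB.
by exists (M + K) => t; apply: le_trans (ler_normB _ _) _; exact: lerD.
Qed.

Lemma bounded_measurableM {f g} : bounded_measurable f -> bounded_measurable g ->
  bounded_measurable (fun t => f t * g t).
Proof.
move=> [mf [M fM]] [mg [K gK]]; split; first exact: measurable_funM.
by exists (M * K) => t; rewrite normrM; apply: ler_pM.
Qed.

Lemma bounded_measurable_halfsqr {f} : bounded_measurable f ->
  bounded_measurable (fun t => f t ^+ 2 / 2).
Proof.
by move=> bf; exact: bounded_measurableM (bounded_measurableM bf bf) (bounded_measurable_cst _).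
Qed.

Lemma bounded_measurable_sum (I : Type) (r : seq I) (F : I -> T -> R) :
  (forall i, bounded_measurable (F i)) ->
  bounded_measurable (fun t => \sum_(i <- r) F i t).
Proof.
move=> bF; elim: r => [|i r IH].
  by rewrite (_ : (fun _ => _) = fun=> 0); [exact: bounded_measurable_cst |
    apply: funext => t; rewrite big_nil].
rewrite (_ : (fun _ => _) = fun t => F i t + \sum_(j <- r) F j t).
  exact: bounded_measurableD.
by apply: funext => t; rewrite big_cons.
Qed.

Lemma bounded_measurable_indic {A} : measurable A -> bounded_measurable (\1_A).
Proof.
move=> mA; split; first exact: measurable_indic.
by exists 1 => t; rewrite /indic; case: (t \in A); rewrite ?normr1 ?normr0.
Qed.

Lemma bRintegralD {f g} : bounded_measurable f -> bounded_measurable g ->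
  \int[P]_t (f t + g t) = \int[P]_t f t + \int[P]_t g t.
Proof. by move=> bf bg; apply: RintegralD => //; exact: bounded_measurable_integrable. Qed.

Lemma bRintegralB {f g} : bounded_measurable f -> bounded_measurable g ->
  \int[P]_t (f t - g t) = \int[P]_t f t - \int[P]_t g t.
Proof. by move=> bf bg; apply: RintegralB => //; exact: bounded_measurable_integrable. Qed.

Lemma bRintegralZl (c : R) {f} : bounded_measurable f ->
  \int[P]_t (c * f t) = c * \int[P]_t f t.
Proof. by move=> bf; apply: RintegralZl => //; exact: bounded_measurable_integrable. Qed.

Lemma Rintegral_cst_prob (c : R) : \int[P]_t c = c.
Proof.
by rewrite Rintegral_cst // (_ : fine _ = 1) ?mulr1 //; exact: (congr1 fine (probability_setT P)).
Qed.

Lemma bRintegral_sum (I : Type) (r : seq I) (F : I -> T -> R) :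
  (forall i, bounded_measurable (F i)) ->
  \int[P]_t (\sum_(i <- r) F i t) = \sum_(i <- r) \int[P]_t F i t.
Proof.
move=> bF; elim: r => [|i r IH].
  by under eq_Rintegral do rewrite big_nil; rewrite Rintegral_cst_prob big_nil.
under eq_Rintegral do rewrite big_cons.
by rewrite bRintegralD ?IH ?big_cons //; exact: bounded_measurable_sum.
Qed.

Lemma Rintegral_indic A : measurable A -> \int[P]_t \1_A t = fine (P A).
Proof. by move=> mA; rewrite /Rintegral integral_indic // setIT. Qed.

Lemma le_bRintegral {f g} : bounded_measurable f -> bounded_measurable g ->
  (forall t, f t <= g t) -> \int[P]_t f t <= \int[P]_t g t.
Proof. by move=> bf bg fg; apply: le_Rintegral => //; exact: bounded_measurable_integrable. Qed.

Lemma norm_bRintegral_le {f} (c : R) : bounded_measurable f ->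
  (forall t, `|f t| <= c) -> `|\int[P]_t f t| <= c.
Proof.
move=> bf fc; have intf := bounded_measurable_integrable bf.
apply: le_trans (le_normr_Rintegral measurableT intf) _.
rewrite -[leRHS](Rintegral_cst_prob c); apply: le_Rintegral => //.
- exact: integrable_norm.
- exact: finite_measure_integrable_cst.
Qed.

Lemma integral_ae_bounded {f g} : measurable_fun setT f -> bounded_measurable g ->
  {ae P, forall t, f t = g t} -> (\int[P]_t (f t)%:E = (\int[P]_t g t)%:E)%E.
Proof.
move=> mf bg fg; rewrite /Rintegral fineK; last first.
  exact/integrable_fin_num/bounded_measurable_integrable.
apply: ae_eq_integral => //; [exact/measurable_EFinP | exact/measurable_EFinP/bg.1 |].
by apply: filterS fg => t /= ->.
Qed.

End BoundedExpectation.

Definition superlevel_in {T : Type} {R : realType} (G : set (set T)) (f : T -> R) :=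
  forall c, G [set t | c <= f t].

Lemma measurable_superlevel {d} {T : measurableType d} {R : realType} {f : T -> R} :
  measurable_fun setT f -> superlevel_in measurable f.
Proof.
move=> mf c; have := mf measurableT _ (measurable_itv `[c, +oo[).
by rewrite setTI; congr measurable; apply/seteqP; split => t /=; rewrite in_itv /= andbT.
Qed.

Lemma measurable_sublevel {d} {T : measurableType d} {R : realType} {f : T -> R} (c : R) :
  measurable_fun setT f -> measurable [set t | f t <= c].
Proof.
move=> mf; have := mf measurableT _ (measurable_itv `]-oo, c]).
by rewrite setTI; congr measurable; apply/seteqP; split => t /=; rewrite in_itv.
Qed.

Section GeneratedSigma.
Context {d} {T : measurableType d} {R : realType}.
Implicit Types (G : set (set T)) (f : T -> R).

Lemma g_sigma_measurable {G} : G `<=` measurable -> <<s G >> `<=` measurable.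
Proof. by move=> GT; apply: smallest_sub => //; exact: sigma_algebra_measurable. Qed.

Lemma g_sigma_superlevel {G f} :
  measurable_fun (setT : set (g_sigma_algebraType G)) f -> superlevel_in <<s G >> f.
Proof. exact: (@measurable_superlevel _ (g_sigma_algebraType G)). Qed.

Lemma measurable_fun_g_sigma {G f} : (forall B, measurable B -> G (f @^-1` B)) ->
  measurable_fun (setT : set (g_sigma_algebraType G)) f.
Proof. by move=> Gf _ B mB; rewrite setTI; apply: sub_sigma_algebra; exact: Gf. Qed.

Lemma measurable_fun_of_g_sigma {G f} : G `<=` measurable ->
  measurable_fun (setT : set (g_sigma_algebraType G)) f -> measurable_fun setT f.
Proof. by move=> GT mf _ B mB; apply: (g_sigma_measurable GT); exact: mf. Qed.

End GeneratedSigma.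

Section Staircase.
Context {d} {T : measurableType d} {R : realType} (P : probability T R).
Implicit Types (f psi : T -> R).

Definition staircase (M : R) (N : nat) f t : R :=
  - M + 2 * M / N.+1%:R *
    \sum_(k < N.+1) \1_[set u | k.+1%:R * (2 * M / N.+1%:R) - M <= f u] t.

Lemma staircase_approx (M : R) N f t : 0 < M -> `|f t| <= M ->
  0 <= f t - staircase M N f t <= 2 * M / N.+1%:R.
Proof.
move=> M0; rewrite ler_norml => /andP[fM1 fM2]; set h := 2 * M / N.+1%:R.
have h0 : 0 < h by apply: divr_gt0; [lra | exact: ltr0Sn].
set x := (f t + M) / h.
have x0 : 0 <= x by apply: divr_ge0; lra.
have fx : f t = x * h - M by rewrite /x divfK ?gt_eqF //; ring.
have Nh : N.+1%:R * h = 2 * M by rewrite /h mulrC divfK // pnatr_eq0.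
have xN : x <= N.+1%:R by rewrite /x ler_pdivrMr // Nh; lra.
have [Sx /(_ xN) xS _] := stair_count N.+1 x x0.
rewrite /staircase -/h; set S := \sum_(k < N.+1) _ in Sx xS *.
rewrite (_ : \sum_(k < N.+1) _ = S).
  by rewrite fx; apply/andP; split; nra.
apply: eq_bigr => k _; rewrite /indic; congr (_%:R); congr nat_of_bool.
have -> : (k.+1%:R <= x) = (k.+1%:R * h - M <= f t) by rewrite fx lerD2r ler_pM2r.
by apply/idP/idP => [/set_mem|/mem_set].
Qed.

Lemma Rintegral_staircase_mul (M : R) N f psi :
  measurable_fun setT f -> bounded_measurable psi ->
  (forall c, \int[P]_t (\1_[set t | c <= f t] t * psi t) =
             fine (P [set t | c <= f t]) * \int[P]_t psi t) ->
  \int[P]_t (staircase M N f t * psi t) =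
  \int[P]_t staircase M N f t * \int[P]_t psi t.
Proof.
move=> mf bpsi hyp; rewrite /staircase; set h := 2 * M / N.+1%:R.
set A := fun k : 'I_N.+1 => [set u | k.+1%:R * h - M <= f u].
have bA k : bounded_measurable (\1_(A k)).
  exact/bounded_measurable_indic/measurable_superlevel.
have bApsi k : bounded_measurable (fun t => \1_(A k) t * psi t).
  exact: bounded_measurableM.
have bhS (g : 'I_N.+1 -> T -> R) : (forall k, bounded_measurable (g k)) ->
    bounded_measurable (fun t => h * \sum_(k < N.+1) g k t).
  by move=> bg; apply: bounded_measurableM; [exact: bounded_measurable_cst |
    exact: bounded_measurable_sum].
transitivity (\int[P]_t (- M * psi t + h * \sum_k (\1_(A k) t * psi t))).
  by apply: eq_Rintegral => t _; rewrite mulrDl -mulrA mulr_suml.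
rewrite !bRintegralD ?bRintegralZl ?bRintegral_sum //;
  try solve [exact: bA | exact: bApsi | exact: bounded_measurable_cst |
             exact: bounded_measurableM (bounded_measurable_cst _) bpsi |
             apply: bhS => k; first [exact: bA | exact: bApsi] |
             apply: bounded_measurable_sum => k; first [exact: bA | exact: bApsi]].
rewrite /= Rintegral_cst_prob mulrDl -[in RHS]mulrA mulr_suml.
by congr (_ + _ * _); apply: eq_bigr => k _; rewrite hyp Rintegral_indic //;
  exact: measurable_superlevel.
Qed.

End Staircase.

Lemma measurable_dotX {d} {T : measurableType d} {R : realType} n (v : 'rV[R]_n)
    (Y : 'I_n -> T -> R) :
  (forall i, measurable_fun setT (Y i)) -> measurable_fun setT (dotX v Y).
Proof. by move=> mY; apply: measurable_sum => i; exact: measurable_funM. Qed.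

Section IndependentProduct.
Context {d} {T : measurableType d} {R : realType} (P : probability T R).
Implicit Types (G H : set (set T)) (f g psi : T -> R).

(* It suffices to test the product rule against the superlevel sets of [f]:
   their indicators span the staircase functions, which approximate [f]
   uniformly. *)
Lemma Rintegral_mul_superlevel {f psi} :
  bounded_measurable f -> bounded_measurable psi ->
  (forall c, \int[P]_t (\1_[set t | c <= f t] t * psi t) =
             fine (P [set t | c <= f t]) * \int[P]_t psi t) ->
  \int[P]_t (f t * psi t) = \int[P]_t f t * \int[P]_t psi t.
Proof.
move=> bf bpsi hyp; have [M M0 fM] := bounded_measurable_pos bf.
have [K K0 psiK] := bounded_measurable_pos bpsi.
apply: (@eq_of_norm_le_div _ _ _ (4 * M * K)) => N.
set h := 2 * M / N.+1%:R; set fN := staircase M N f.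
have close t : 0 <= f t - fN t <= h := staircase_approx M N f t M0 (fM t).
have bfN : bounded_measurable fN.
  split; last by exists (M + h) => t; have := close t; have := fM t;
    rewrite !ler_norml => /andP[? ?] /andP[? ?]; apply/andP; split; lra.
  apply: measurable_funD; first exact: measurable_cst.
  apply: measurable_funM; first exact: measurable_cst.
  by apply: measurable_sum => k; exact/measurable_indic/measurable_superlevel/bf.1.
have bfNpsi : bounded_measurable (fun t => fN t * psi t) := bounded_measurableM bfN bpsi.
have fN_psi := Rintegral_staircase_mul P M N f psi bf.1 bpsi hyp.
have err_mul : `|\int[P]_t (f t * psi t) - \int[P]_t (fN t * psi t)| <= h * K.
  rewrite -bRintegralB //; last exact: bounded_measurableM.
  apply: norm_bRintegral_le; first exact/bounded_measurableB/bfNpsi/bounded_measurableM.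
  move=> t; rewrite -mulrBl normrM; apply: ler_pM => //.
  by have /andP[? ?] := close t; rewrite ger0_norm.
have err_f : `|\int[P]_t fN t - \int[P]_t f t| <= h.
  rewrite -bRintegralB //; apply: norm_bRintegral_le; first exact: bounded_measurableB.
  by move=> t; have /andP[? ?] := close t; rewrite distrC ger0_norm.
have psi_le : `|\int[P]_t psi t| <= K := norm_bRintegral_le P K bpsi psiK.
have -> : 4 * M * K / N.+1%:R = h * K + h * K by rewrite /h; field.
rewrite (_ : _ - _ = \int[P]_t (f t * psi t) - \int[P]_t (fN t * psi t) +
  (\int[P]_t fN t - \int[P]_t f t) * \int[P]_t psi t); last by rewrite fN_psi; ring.
apply: le_trans (ler_normD _ _) _; rewrite normrM.
by apply: lerD => //; apply: ler_pM.
Qed.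

Definition indep2 G H := forall A B, G A -> H B -> P (A `&` B) = (P A * P B)%E.

Lemma indep2_Rintegral_mul {G H f g} : indep2 G H ->
  bounded_measurable f -> bounded_measurable g ->
  superlevel_in G f -> superlevel_in H g ->
  \int[P]_t (f t * g t) = \int[P]_t f t * \int[P]_t g t.
Proof.
move=> indGH bf bg Gf Hg; apply: Rintegral_mul_superlevel => // c.
set A := [set t | c <= f t]; have mA : measurable A by exact: measurable_superlevel bf.1 c.
under eq_Rintegral do rewrite mulrC.
rewrite (Rintegral_mul_superlevel bg (bounded_measurable_indic mA)).
  by rewrite Rintegral_indic // mulrC.
move=> c'; set B := [set t | c' <= g t].
have mB : measurable B by exact: measurable_superlevel bg.1 c'.
transitivity (\int[P]_t \1_(A `&` B) t).
  by apply: eq_Rintegral => t _; rewrite indicI mulrC.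
rewrite !Rintegral_indic //; last exact: measurableI.
by rewrite (indGH _ _ (Gf c) (Hg c')) fineM ?fin_num_measure // mulrC.
Qed.

Lemma dynkin_indep_set A : measurable A ->
  dynkin [set S | measurable S /\ P (A `&` S) = (P A * P S)%E].
Proof.
move=> mA; have finA : P A \is a fin_num by exact: fin_num_measure.
split.
- by split; [exact: measurableT | rewrite setIT probability_setT mule1].
- move=> B [mB AB]; split; first exact: measurableC.
  rewrite probability_setC // -setDE measureD //; last first.
    by apply: le_lt_trans (probability_le1 P mA) _; exact: ltry.
  apply: etrans (congr1 (fun z => (P A - z)%E) AB) _.
  have : P B \is a fin_num by exact: fin_num_measure.
  move: finA; case: (P A) => // a _; case: (P B) => // b _ /=.
  by rewrite -!EFinD -EFinM mulrDr mulrN mulr1.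
- move=> F trivF LF; have mF k : measurable (F k) by case: (LF k).
  split; first exact: bigcupT_measurable.
  rewrite setI_bigcupr (measure_bigcup _ setT (fun k => A `&` F k)); last 2 first.
  + by move=> k _; exact: measurableI.
  + exact: trivIset_setIl.
  rewrite (measure_bigcup _ setT F) //; move: finA (fun k => (LF k).2).
  case: (P A) => // a _ AF; rewrite -nneseriesZl //.
  by apply: eq_eseriesr => k _; exact: AF.
Qed.

Lemma indep2_sigma_r G H : G `<=` measurable -> H `<=` measurable ->
  setI_closed H -> indep2 G H -> indep2 G <<s H >>.
Proof.
move=> GT HT HI indGH A S GA.
have /dynkin_lambda_system lambdaA := dynkin_indep_set _ (GT A GA).
suff /(_ S) : <<s H >> `<=` [set S | measurable S /\ P (A `&` S) = (P A * P S)%E].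
  by move=> HS /HS[].
apply: (lambda_system_subset HI lambdaA) => // B HB.
by split; [exact: HT | exact: indGH].
Qed.

End IndependentProduct.

Section HuberRiskBound.
Context {d} {T : measurableType d} {R : realType} (P : probability T R).
Variables (n : nat) (D sigma alpha r : R) (wstar w : 'rV[R]_n).
Variables (X : 'I_n -> T -> R) (eps b : T -> R).
Hypotheses (D_ge0 : 0 <= D) (sigma_ge0 : 0 <= sigma) (alpha_lt1 : alpha < 1).
Hypothesis r_ge : 2 * D + sigma <= r.
Hypotheses (wstar_le : vnorm wstar <= D) (w_le : vnorm w <= D).
Hypotheses (mX : forall i, measurable_fun setT (X i))
  (meps : measurable_fun setT eps) (mb : measurable_fun setT b).
Hypothesis indep : indep3 P (sigma_vec X) (sigma_rv eps) (sigma_rv b).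
Hypothesis X_le1 : {ae P, forall t, \sum_i X i t ^+ 2 <= 1}.
Hypothesis EX0 : forall i, ('E_P[X i] = 0)%E.
Hypothesis eps_le : {ae P, forall t, `|eps t| <= sigma}.
Hypothesis Pb : P [set t | b t != 0] = alpha%:E.
Hypotheses (huber_int_w : P.-integrable setT
    (fun t => (huber r (dotX w X t - (dotX wstar X t + eps t + b t)))%:E))
  (huber_int_wstar : P.-integrable setT
    (fun t => (huber r (dotX wstar X t - (dotX wstar X t + eps t + b t)))%:E)).

Let GX := [set A : set T | exists i (B : set R), measurable B /\ A = X i @^-1` B].
Let Ge := [set A : set T | exists B : set R, measurable B /\ A = eps @^-1` B].
Let Gb := [set A : set T | exists B : set R, measurable B /\ A = b @^-1` B].
(* [<<s Geb >>] is the sigma-algebra generated by [eps] and [b] jointly. *)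
Let Geb := [set E `&` C | E in <<s Ge >> & C in <<s Gb >>].
Let TX := g_sigma_algebraType GX.
Let Te := g_sigma_algebraType Ge.
Let Tb := g_sigma_algebraType Gb.
Let Teb := g_sigma_algebraType Geb.

Let GX_meas : GX `<=` measurable.
Proof. by move=> _ [i [B [mB ->]]]; have := mX i measurableT B mB; rewrite setTI. Qed.

Let Ge_meas : Ge `<=` measurable.
Proof. by move=> _ [B [mB ->]]; have := meps measurableT B mB; rewrite setTI. Qed.

Let Gb_meas : Gb `<=` measurable.
Proof. by move=> _ [B [mB ->]]; have := mb measurableT B mB; rewrite setTI. Qed.

Let sigma_X_meas : <<s GX >> `<=` measurable := g_sigma_measurable GX_meas.
Let sigma_e_meas : <<s Ge >> `<=` measurable := g_sigma_measurable Ge_meas.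
Let sigma_b_meas : <<s Gb >> `<=` measurable := g_sigma_measurable Gb_meas.

Let Geb_meas : Geb `<=` measurable.
Proof.
by move=> _ [E eE [C bC <-]]; apply: measurableI; [exact: sigma_e_meas | exact: sigma_b_meas].
Qed.

Let Geb_setI : setI_closed Geb.
Proof.
move=> _ _ [E1 eE1 [C1 bC1 <-]] [E2 eE2 [C2 bC2 <-]].
exists (E1 `&` E2); first exact: (@measurableI _ Te).
by exists (C1 `&` C2); [exact: (@measurableI _ Tb) | rewrite setIACA].
Qed.

Let indep_X_eps : indep2 P <<s GX >> <<s Ge >>.
Proof.
move=> A B XA eB; have := indep A B setT XA eB (@measurableT _ Tb).
by rewrite setIT probability_setT mule1.
Qed.

Let indep_X_b : indep2 P <<s GX >> <<s Gb >>.
Proof.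
move=> A C XA bC; have := indep A setT C XA (@measurableT _ Te) bC.
by rewrite setIT probability_setT mule1.
Qed.

Let indep_X_epsb : indep2 P <<s GX >> <<s Geb >>.
Proof.
apply: indep2_sigma_r => //.
move=> A _ XA [E eE [C bC <-]]; have := indep setT E C (@measurableT _ TX) eE bC.
by rewrite setTI probability_setT mul1e setIA indep // => ->; rewrite muleA.
Qed.

Let mX_TX i : measurable_fun (setT : set TX) (X i).
Proof. by apply: measurable_fun_g_sigma => B mB; exists i, B. Qed.

Let meps_Te : measurable_fun (setT : set Te) eps.
Proof. by apply: measurable_fun_g_sigma => B mB; exists B. Qed.

Let Ox := [set t | \sum_i X i t ^+ 2 <= 1].
Let Oe := [set t | `|eps t| <= sigma].
Let Xp i := X i \_ Ox.
Let ep := eps \_ Oe.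

Let mXp i : measurable_fun (setT : set TX) (Xp i).
Proof.
have mOx : measurable (Ox : set TX).
  by apply: measurable_sublevel; apply: measurable_sum => j; exact: measurable_funX (mX_TX j).
by apply/(measurable_restrictT _ mOx); exact: measurable_funTS.
Qed.

Let mep : measurable_fun (setT : set Te) ep.
Proof.
have mOe : measurable (Oe : set Te) by apply: measurable_sublevel; exact: measurableT_comp.
by apply/(measurable_restrictT _ mOe); exact: measurable_funTS.
Qed.

Let Xp_le1 t : \sum_i Xp i t ^+ 2 <= 1.
Proof.
rewrite /Xp; case Oxt: (t \in Ox); under eq_bigr do rewrite patchE Oxt.
  exact: set_mem.
by rewrite big1 // => i _; rewrite expr0n.
Qed.

Let ep_le t : `|ep t| <= sigma.
Proof. by rewrite /ep patchE; case: ifPn => [/set_mem //|_]; rewrite normr0. Qed.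

Let trunc_ae : {ae P, forall t, (forall i, Xp i t = X i t) /\ ep t = eps t}.
Proof.
apply: filterS2 X_le1 eps_le => t Oxt Oet.
by split => [i|]; rewrite /Xp /ep patchE mem_set.
Qed.

Let bXp i : bounded_measurable (Xp i).
Proof.
split; first exact: measurable_fun_of_g_sigma GX_meas (mXp i).
by exists 1 => t; exact: norm_le1_of_sum_sqr_le1 (Xp_le1 t).
Qed.

Let bep : bounded_measurable ep.
Proof. by split; [exact: measurable_fun_of_g_sigma Ge_meas mep | exists sigma]. Qed.

Let EXp0 i : \int[P]_t Xp i t = 0.
Proof.
apply: EFin_inj; rewrite -(integral_ae_bounded P (mX i) (bXp i)).
  by move: (EX0 i); rewrite unlock.
by apply: filterS trunc_ae => t [->].
Qed.

Let Z t := dotX w Xp t - dotX wstar Xp t.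

Let mZ : measurable_fun (setT : set TX) Z.
Proof. by apply: measurable_funB; exact: measurable_dotX. Qed.

Let dotXp_le v t : `|dotX v Xp t| <= vnorm v.
Proof. exact (norm_dot_le_vnorm v (Xp_le1 t)). Qed.

Let Z_le t : `|Z t| <= 2 * D.
Proof.
apply: le_trans (ler_normB _ _) _.
apply: le_trans (lerD (dotXp_le w t) (dotXp_le wstar t)) _.
by rewrite mulr_natl mulr2n; exact: lerD.
Qed.

Let bZ : bounded_measurable Z.
Proof. by split; [exact: measurable_fun_of_g_sigma GX_meas mZ | exists (2 * D)]. Qed.

Let Z_mul_indep0 H g : indep2 P <<s GX >> H -> bounded_measurable g ->
  superlevel_in H g -> \int[P]_t (Z t * g t) = 0.
Proof.
move=> indH bg Hg.
transitivity (\int[P]_t \sum_i (w - wstar) ord0 i * (Xp i t * g t)).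
  apply: eq_Rintegral => t _; rewrite /Z /dotX -sumrB mulr_suml.
  by apply: eq_bigr => i _; rewrite !mxE -mulrBl mulrA.
rewrite bRintegral_sum; last first.
  move=> i; apply: bounded_measurableM; first exact: bounded_measurable_cst.
  exact: bounded_measurableM.
apply: big1 => i _; rewrite bRintegralZl; last exact: bounded_measurableM.
rewrite (indep2_Rintegral_mul P indH (bXp i) bg (g_sigma_superlevel (mXp i)) Hg).
by rewrite EXp0 mul0r mulr0.
Qed.

Let r_ge0 : 0 <= r.
Proof. by apply: le_trans r_ge; rewrite addr_ge0 // mulr_ge0. Qed.

Let a t := - (ep t + b t).
Let Bz := [set t | b t = 0].
Let Del t := huber r (Z t + a t) - huber r (a t).

Let Del_ge t : clip r (a t) * Z t + \1_Bz t * (Z t ^+ 2 / 2) <= Del t.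
Proof.
apply: huber_incr_ge => // /set_mem bt0.
have ar : `|a t| <= sigma by rewrite /a bt0 addr0 normrN.
split; last by apply: le_trans (ler_normD _ _) (le_trans (lerD (Z_le t) ar) r_ge).
by apply: le_trans ar (le_trans _ r_ge); rewrite lerDr mulr_ge0.
Qed.

Let mBz : <<s Gb >> Bz.
Proof. by apply: sub_sigma_algebra; exists [set 0]. Qed.

Let P_Bz : fine (P Bz) = 1 - alpha.
Proof.
have : P (~` Bz) = alpha%:E.
  by rewrite -Pb; congr (P _); apply/seteqP; split => t /= /eqP.
rewrite probability_setC; last exact: sigma_b_meas.
have : P Bz \is a fin_num by apply: fin_num_measure; exact: sigma_b_meas.
by case: (P Bz) => //= p _ [<-]; rewrite subKr.
Qed.

Let bdotXp v : bounded_measurable (dotX v Xp).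
Proof.
split; first by apply: measurable_dotX => i; exact: (bXp i).1.
by exists (vnorm v); exact: dotXp_le.
Qed.

Let sqloss v t := (dotX v Xp t - dotX wstar Xp t - ep t) ^+ 2 / 2.

Let bsqloss v : bounded_measurable (sqloss v).
Proof.
by apply/bounded_measurable_halfsqr/bounded_measurableB => //;
  exact: bounded_measurableB.
Qed.

Let sq_excess :
  \int[P]_t sqloss w t - \int[P]_t sqloss wstar t = \int[P]_t (Z t ^+ 2 / 2).
Proof.
rewrite -bRintegralB //.
transitivity (\int[P]_t (Z t ^+ 2 / 2 - Z t * ep t)).
  by apply: eq_Rintegral => t _; rewrite /sqloss /Z subrr; field.
rewrite bRintegralB /= ?(Z_mul_indep0 _ _ indep_X_eps bep (g_sigma_superlevel mep)) ?subr0 //.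
- exact: bounded_measurable_halfsqr.
- exact: bounded_measurableM.
Qed.

Let ma : measurable_fun (setT : set Teb) a.
Proof.
apply/measurableT_comp/measurable_funD => //.
- apply: measurable_fun_g_sigma => B mB; exists (ep @^-1` B).
    by have := mep measurableT B mB; rewrite setTI.
  by exists setT; [exact: (@measurableT _ Tb) | exact: setIT].
- apply: measurable_fun_g_sigma => B mB; exists setT; first exact: (@measurableT _ Te).
  exists (b @^-1` B); last exact: setTI.
  by apply: sub_sigma_algebra; exists B.
Qed.

Let bDel : bounded_measurable Del.
Proof.
split; last by exists (r * `|2 * D|) => t; apply: le_trans (huber_lipschitz _ _ _ r_ge0) _;
  rewrite ler_wpM2l // (le_trans (Z_le t)) // ler_norm.
apply: measurable_funB; apply: measurableT_comp (measurable_huber r r_ge0) _.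
  exact/measurable_funD/(measurable_fun_of_g_sigma Geb_meas ma)/bZ.1.
exact: measurable_fun_of_g_sigma Geb_meas ma.
Qed.

Let huber_excess_ge : (1 - alpha) * \int[P]_t (Z t ^+ 2 / 2) <= \int[P]_t Del t.
Proof.
have bclip : bounded_measurable (fun t => clip r (a t)).
  split; last by exists r => t; exact: norm_clip_le.
  exact: measurable_fun_of_g_sigma Geb_meas (measurableT_comp (measurable_clip r) ma).
have mZ2 : measurable_fun (setT : set TX) (fun t => Z t ^+ 2 / 2).
  by apply: measurable_funM => //; exact: measurable_funX.
have bZ2 := bounded_measurable_halfsqr bZ.
have bI : bounded_measurable (\1_Bz : T -> R).
  by apply: bounded_measurable_indic; exact: sigma_b_meas.
have clip_Z0 : \int[P]_t (clip r (a t) * Z t) = 0.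
  rewrite -(Z_mul_indep0 _ _ indep_X_epsb bclip); last first.
    exact: g_sigma_superlevel (measurableT_comp (measurable_clip r) ma).
  by apply: eq_Rintegral => t _; rewrite mulrC.
have indic_Z2 : \int[P]_t (\1_Bz t * (Z t ^+ 2 / 2)) =
    (1 - alpha) * \int[P]_t (Z t ^+ 2 / 2).
  have mI : measurable_fun (setT : set Tb) (\1_Bz : T -> R) := @measurable_indic _ Tb R setT Bz mBz.
  rewrite -P_Bz -Rintegral_indic; last exact: sigma_b_meas.
  rewrite [RHS]mulrC.
  rewrite -(indep2_Rintegral_mul P indep_X_b bZ2 bI (g_sigma_superlevel mZ2)
    (g_sigma_superlevel mI)).
  by apply: eq_Rintegral => t _; rewrite mulrC.
have := le_bRintegral P (bounded_measurableD (bounded_measurableM bclip bZ)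
  (bounded_measurableM bI bZ2)) bDel Del_ge.
rewrite bRintegralD /=; last 2 first.
- exact: bounded_measurableM.
- exact: bounded_measurableM.
by rewrite clip_Z0 indic_Z2 add0r.
Qed.

Let trunc_dotX_ae :
  {ae P, forall t, (forall v, dotX v Xp t = dotX v X t) /\ ep t = eps t}.
Proof.
apply: filterS trunc_ae => t [XpX ->]; split => // v.
by apply: eq_bigr => i _; rewrite XpX.
Qed.

Let sq_risk_trunc v : sq_risk P wstar X eps v = (\int[P]_t sqloss v t)%:E.
Proof.
apply: (integral_ae_bounded P _ (bsqloss v)).
  apply: measurable_funM => //; apply: measurable_funX.
  by apply: measurable_funB => //; apply: measurable_funB; exact: measurable_dotX.
by apply: filterS trunc_dotX_ae => t [dotXE epE]; rewrite /sqloss !dotXE epE.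
Qed.

Let huber_risk_excess_trunc :
  (huber_risk P r wstar X eps b w - huber_risk P r wstar X eps b wstar)%E =
  (\int[P]_t Del t)%:E.
Proof.
rewrite /huber_risk -integralB_EFin //; under eq_integral do rewrite -EFinB.
apply: (integral_ae_bounded P _ bDel).
  apply: measurable_funB; apply: measurableT_comp (measurable_huber r r_ge0) _;
    by apply: measurable_funB; [exact: measurable_dotX |
      do 2 apply: measurable_funD => //; exact: measurable_dotX].
apply: filterS trunc_dotX_ae => t [dotXE epE].
by rewrite /Del /Z /a !dotXE epE; congr (huber r _ - huber r _); ring.
Qed.

Lemma sq_risk_excess_le :
  (sq_risk P wstar X eps w - sq_risk P wstar X eps wstar <=
   ((1 - alpha)^-1)%:E *
     (huber_risk P r wstar X eps b w - huber_risk P r wstar X eps b wstar))%E.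
Proof.
rewrite !sq_risk_trunc huber_risk_excess_trunc -EFinB -EFinM lee_fin sq_excess.
have alpha1 : 0 < 1 - alpha by rewrite subr_gt0.
by rewrite -(ler_pM2l alpha1) mulrA mulfV ?mul1r ?gt_eqF.
Qed.

End HuberRiskBound.

Theorem lemma2 (R : realType) (n : nat) (D sigma alpha : R)
  (dT : measure_display) (T : measurableType dT) (P : probability T R)
  (wstar : 'rV[R]_n) (X : 'I_n -> {RV P >-> R}) (eps b : {RV P >-> R}) :
  (1 <= n)%N -> 0 < D -> 0 <= sigma -> 0 <= alpha -> alpha < 1 ->
  vnorm wstar <= D ->
  indep3 P (sigma_vec (fun i => X i : T -> R)) (sigma_rv eps) (sigma_rv b) ->
  {ae P, forall t, \sum_(i < n) (X i t) ^+ 2 <= 1} ->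
  (forall i, ('E_P[X i] = 0)%E) ->
  {ae P, forall t, `|eps t| <= sigma} ->
  ('E_P[eps] = 0)%E ->
  P [set t | b t != 0] = alpha%:E ->
  (* L_R is finite on W, needed for L_R(w) - L_R(wstar) to be meaningful *)
  (forall v : 'rV[R]_n, vnorm v <= D ->
     P.-integrable setT (fun t => (huber (6 * D + sigma)
        (dotX v (fun i => X i : T -> R) t
         - (dotX wstar (fun i => X i : T -> R) t + eps t + b t)))%:E)) ->
  forall w : 'rV[R]_n, vnorm w <= D ->
    (sq_risk P wstar (fun i => X i : T -> R) eps w
       - sq_risk P wstar (fun i => X i : T -> R) eps wstar <=
     ((1 - alpha)^-1)%:E *
       (huber_risk P (6 * D + sigma) wstar (fun i => X i : T -> R) eps b w
        - huber_risk P (6 * D + sigma) wstar (fun i => X i : T -> R) eps b wstar))%E.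
Proof.
move=> _ D_gt0 sigma_ge0 _ alpha_lt1 wstar_le indep X_le1 EX0 eps_le _ Pb
  huber_int w w_le.
apply: (sq_risk_excess_le P n D sigma alpha (6 * D + sigma)) => //.
- exact: ltW.
- by rewrite lerD2r ler_pM2r // ler_nat.
- exact: huber_int.
- exact: huber_int.
Qed.
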